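(* Let $G$ be an abelian group, $S$ a multiset of elements of $G$, and $\Gamma=\Phi(G,S)$. For any two distinct members $s,t$ of $S$, all the connected components of the induced subgraph $\Gamma[V_s\cup V_t]$ are isomorphic to one another, and each is complete bipartite (every vertex of the component lying in $V_s$ is adjacent to every vertex of the component lying in $V_t$).
   Context: For a group $G$ and a multiset $S$ of elements of $G$, $\Phi(G,S)$ is the multigraph (parallel edges allowed) whose vertex set is the union over the members $s$ of $S$ (with multiplicity, a repeated element giving a separate copy of its cosets per occurrence) of the levels $V_s=\{\langle s\rangle x: x\in G\}$ (right cosets), with, for $\langle s\rangle x\in V_s$, $\langle t\rangle y\in V_t$, $s,t$ distinct members of $S$, one edge labeled $g$ between them for each $g\in\langle s\rangle x\cap\langle t\rangle y$, and no other edges. The induced subgraph $\Gamma[X]$ has vertex set $X$ and all edges of $\Gamma$ with both end-points in $X$. *)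

From mathcomp Require Import all_boot all_order all_algebra.
From Stdlib Require Import Relation_Operators.
Set Implicit Arguments. Unset Strict Implicit. Unset Printing Implicit Defensive.
Import GRing.Theory.
Local Open Scope ring_scope.

Record mgraph := MGraph {
  mvert : Type;
  medge : Type;
  endpt : medge -> mvert * mvert }.

Definition madj (H : mgraph) (u v : mvert H) : Prop :=
  exists e : medge H, endpt e = (u, v) \/ endpt e = (v, u).

Definition mconn (H : mgraph) : mvert H -> mvert H -> Prop :=
  clos_refl_trans (mvert H) (@madj H).

Definition induced (H : mgraph) (X : mvert H -> Prop) : mgraph :=
  @MGraph {v : mvert H | X v}
          {e : medge H | X (endpt e).1 /\ X (endpt e).2}
          (fun e => (exist X (endpt (proj1_sig e)).1 (proj1 (proj2_sig e)),
                     exist X (endpt (proj1_sig e)).2 (proj2 (proj2_sig e)))).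

Definition component (H : mgraph) (v : mvert H) : mgraph :=
  induced (mconn v).

Definition miso (H1 H2 : mgraph) : Prop :=
  exists (f : mvert H1 -> mvert H2) (g : medge H1 -> medge H2),
    bijective f /\ bijective g /\
    forall e, endpt (g e) = (f (endpt e).1, f (endpt e).2) \/
              endpt (g e) = (f (endpt e).2, f (endpt e).1).

(** The group is written additively (zmodType = abelian group).
    Right coset <s> x = { k s + x | k in Z } = { s *~ k + x }. *)
Definition coset (G : zmodType) (s x : G) : G -> Prop :=
  fun y => exists k : int, y = s *~ k + x.

(** Vertices of Phi(G,S): pairs (i, C) with i a member (index) of the
    multiset S and C a coset of <S_i>. *)
Definition Phi_vert (G : zmodType) (S : seq G) : Type :=
  {p : 'I_(size S) * (G -> Prop) | exists x : G, p.2 = coset (nth 0 S p.1) x}.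

Definition lvl (G : zmodType) (S : seq G) (v : Phi_vert S) : 'I_(size S) :=
  (proj1_sig v).1.

Definition cos (G : zmodType) (S : seq G) (v : Phi_vert S) : G -> Prop :=
  (proj1_sig v).2.

(** Edges: for distinct members (each unordered pair counted once via
    lvl u < lvl v), one edge labelled g for each g in the intersection. *)
Definition Phi_edge (G : zmodType) (S : seq G) : Type :=
  {q : Phi_vert S * Phi_vert S * G |
     (lvl q.1.1 < lvl q.1.2)%N /\ cos q.1.1 q.2 /\ cos q.1.2 q.2}.

Definition Phi (G : zmodType) (S : seq G) : mgraph :=
  @MGraph (Phi_vert S) (Phi_edge S) (fun e => (proj1_sig e).1).

From mathcomp Require Import all_boot all_order all_algebra.
From Stdlib Require Import Relation_Operators ProofIrrelevance FunctionalExtensionality PropExtensionality.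
Set Implicit Arguments. Unset Strict Implicit. Unset Printing Implicit Defensive.
Import GRing.Theory.
Local Open Scope ring_scope.

(* Translation by [d] maps the coset [<s> x] to [<s> (x + d)], so it is a
   level-preserving automorphism of [Phi G S] (edge labels shift by [d]).
   Any two components of [Phi[V_s u V_t]] are matched by a translation: if
   [u] contains [x] and [v] contains [y], translating by [y - x] sends [u] to
   a vertex meeting [v] in [y], hence to the component of [v].  Along a path
   in [V_s u V_t] consecutive cosets intersect, so the cosets of connected
   vertices [u], [v] contain [x] and [x + m s + n t] respectively; when [u]
   lies in [V_s] and [v] in [V_t], the element [x + m s] lies in both, which
   is an edge between them. *)

Lemma sig_val_inj (A : Type) (P : A -> Prop) (x y : sig P) :
  proj1_sig x = proj1_sig y -> x = y.
Proof.
by case: x y => [x px] [y py] /= exy; subst y; rewrite (proof_irrelevance _ px py).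
Qed.

(* Unlike [miso], edge orientations are preserved, which makes inverses and
   restrictions to induced subgraphs easy to build. *)
Record mgraph_iso (A B : mgraph) := MGraphIso {
  iso_v : mvert A -> mvert B;
  iso_vinv : mvert B -> mvert A;
  iso_e : medge A -> medge B;
  iso_einv : medge B -> medge A;
  iso_vK : cancel iso_v iso_vinv;
  iso_vinvK : cancel iso_vinv iso_v;
  iso_eK : cancel iso_e iso_einv;
  iso_einvK : cancel iso_einv iso_e;
  iso_endpt : forall e, endpt (iso_e e) = (iso_v (endpt e).1, iso_v (endpt e).2) }.

Section Isomorphisms.
Variables A B : mgraph.
Implicit Types d : mgraph_iso A B.

Lemma miso_of_iso d : miso A B.
Proof.
exists (iso_v d), (iso_e d); split; [|split].
- exact: Bijective (iso_vK d) (iso_vinvK d).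
- exact: Bijective (iso_eK d) (iso_einvK d).
- by move=> e; left; rewrite iso_endpt.
Qed.

Lemma iso_endpt_inv d e :
  endpt (iso_einv d e) = (iso_vinv d (endpt e).1, iso_vinv d (endpt e).2).
Proof.
have := iso_endpt d (iso_einv d e); rewrite iso_einvK => ->.
by rewrite /= !iso_vK; case: (endpt _).
Qed.

Definition iso_inv d : mgraph_iso B A :=
  MGraphIso (iso_vinvK d) (iso_vK d) (iso_einvK d) (iso_eK d) (iso_endpt_inv d).

Lemma iso_madj d u v : madj u v -> madj (iso_v d u) (iso_v d v).
Proof. by case=> e [h|h]; exists (iso_e d e); rewrite iso_endpt h; [left|right]. Qed.

Lemma iso_mconn d u v : mconn u v -> mconn (iso_v d u) (iso_v d v).
Proof.
elim=> [x y h|x|x y z _ h1 _ h2].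
- exact/rt_step/iso_madj.
- exact: rt_refl.
- exact: rt_trans h1 h2.
Qed.

Section Induced.
Variables (d : mgraph_iso A B) (X : mvert A -> Prop) (Y : mvert B -> Prop).
Hypothesis iso_vX : forall v, X v -> Y (iso_v d v).
Hypothesis iso_vinvY : forall v, Y v -> X (iso_vinv d v).

Definition induced_v (v : mvert (induced X)) : mvert (induced Y) :=
  exist Y (iso_v d (proj1_sig v)) (iso_vX (proj2_sig v)).
Definition induced_vinv (v : mvert (induced Y)) : mvert (induced X) :=
  exist X (iso_vinv d (proj1_sig v)) (iso_vinvY (proj2_sig v)).

Definition induced_e (e : medge (induced X)) : medge (induced Y).
Proof.
exists (iso_e d (proj1_sig e)); case: e => e [h1 h2] /=.
by rewrite iso_endpt; split; apply: iso_vX.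
Defined.

Definition induced_einv (e : medge (induced Y)) : medge (induced X).
Proof.
exists (iso_einv d (proj1_sig e)); case: e => e [h1 h2] /=.
by rewrite iso_endpt_inv; split; apply: iso_vinvY.
Defined.

Definition induced_iso : mgraph_iso (induced X) (induced Y).
Proof.
refine (@MGraphIso _ _ induced_v induced_vinv induced_e induced_einv _ _ _ _ _).
- by move=> v; apply: sig_val_inj; rewrite /= iso_vK.
- by move=> v; apply: sig_val_inj; rewrite /= iso_vinvK.
- by move=> e; apply: sig_val_inj; rewrite /= iso_eK.
- by move=> e; apply: sig_val_inj; rewrite /= iso_einvK.
- by move=> e /=; congr pair; apply: sig_val_inj; rewrite /= iso_endpt.
Defined.
End Induced.
End Isomorphisms.

Lemma mconn_sym (A : mgraph) (u v : mvert A) : mconn u v -> mconn v u.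
Proof.
elim=> [x y [e [h|h]]|x|x y z _ h1 _ h2].
- by apply: rt_step; exists e; right.
- by apply: rt_step; exists e; left.
- exact: rt_refl.
- exact: rt_trans h2 h1.
Qed.

Lemma miso_component (A B : mgraph) (d : mgraph_iso A B) (u : mvert A) (v : mvert B) :
  mconn v (iso_v d u) -> miso (component u) (component v).
Proof.
move=> vdu; apply: miso_of_iso (@induced_iso _ _ d (mconn u) (mconn v) _ _).
- by move=> w uw; apply: rt_trans vdu (iso_mconn d uw).
- move=> w vw; have := iso_mconn (iso_inv d) vdu; rewrite /= iso_vK => udv.
  exact: rt_trans (mconn_sym udv) (iso_mconn (iso_inv d) vw).
Qed.

Section CosetGraph.
Variables (G : zmodType) (S : seq G).
Implicit Types (d : G) (v : Phi_vert S).

Lemma cos_repr v : exists x, cos v x /\ cos v = coset S`_(lvl v) x.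
Proof.
case: v => [[l C] [x /= Hx]]; exists x; rewrite /cos /lvl /= Hx; split=> //.
by exists 0; rewrite mulr0z add0r.
Qed.

Lemma cos_sub v a b : cos v a -> cos v b -> exists k, b - a = S`_(lvl v) *~ k.
Proof.
have [x [_ ->]] := cos_repr v; case=> [m ->] [n ->]; exists (n - m).
by rewrite opprD addrACA subrr addr0 mulrzBr.
Qed.

Lemma cos_shift v a k : cos v a -> cos v (S`_(lvl v) *~ k + a).
Proof.
have [x [_ ->]] := cos_repr v; case=> [m ->]; exists (k + m).
by rewrite mulrzDr addrA.
Qed.

Definition translate_vert d v : Phi_vert S.
Proof.
exists (lvl v, fun z => cos v (z - d)).
case: v => [[l C] [x /= Hx]]; exists (x + d); rewrite /cos /lvl /= Hx.
apply: functional_extensionality => z; apply: propositional_extensionality.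
split=> -[k Hk]; exists k.
- by rewrite addrA -Hk subrK.
- by rewrite Hk addrA addrK.
Defined.

Definition translate_edge d (e : Phi_edge S) : Phi_edge S.
Proof.
exists (translate_vert d (proj1_sig e).1.1, translate_vert d (proj1_sig e).1.2,
        (proj1_sig e).2 + d).
by case: e => [[[u v] g] [lt_uv [ug vg]]]; rewrite /cos /= addrK.
Defined.

Lemma translate_vertK d : cancel (translate_vert d) (translate_vert (- d)).
Proof.
case=> [[l C] pf]; apply: sig_val_inj; congr pair.
by apply: functional_extensionality => z; rewrite /cos /= opprK addrK.
Qed.

Lemma translate_edgeK d : cancel (translate_edge d) (translate_edge (- d)).
Proof. by case=> [[[u v] g] pf]; apply: sig_val_inj; rewrite /= !translate_vertK addrK. Qed.

Lemma translate_vertNK d : cancel (translate_vert (- d)) (translate_vert d).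
Proof. by move=> v; have := translate_vertK (- d) v; rewrite opprK. Qed.

Lemma translate_edgeNK d : cancel (translate_edge (- d)) (translate_edge d).
Proof. by move=> e; have := translate_edgeK (- d) e; rewrite opprK. Qed.

Definition Phi_translation d : mgraph_iso (Phi S) (Phi S) :=
  @MGraphIso (Phi S) (Phi S) _ _ _ _ (translate_vertK d) (translate_vertNK d)
    (translate_edgeK d) (translate_edgeNK d) (fun e => erefl).

Lemma madj_of_common_label (X : mvert (Phi S) -> Prop) (p q : mvert (induced X)) h :
  lvl (proj1_sig p) != lvl (proj1_sig q) ->
  cos (proj1_sig p) h -> cos (proj1_sig q) h -> madj p q.
Proof.
case: p q => [p Xp] [q Xq] /=.
case: (ltngtP (lvl p) (lvl q)) => [lt_pq|lt_pq|/val_inj ->]; rewrite ?eqxx // => _ ph qh.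
- exists (@exist (Phi_edge S) (fun e => X (@endpt (Phi S) e).1 /\ X (@endpt (Phi S) e).2)
    (@exist _ _ (p, q, h) (conj lt_pq (conj ph qh))) (conj Xp Xq)).
  by left; congr pair; apply: sig_val_inj.
- exists (@exist (Phi_edge S) (fun e => X (@endpt (Phi S) e).1 /\ X (@endpt (Phi S) e).2)
    (@exist _ _ (q, p, h) (conj lt_pq (conj qh ph))) (conj Xq Xp)).
  by right; congr pair; apply: sig_val_inj.
Qed.

Lemma common_label_of_madj (X : mvert (Phi S) -> Prop) (p q : mvert (induced X)) :
  madj p q -> exists h, cos (proj1_sig p) h /\ cos (proj1_sig q) h.
Proof.
case=> [[[[[u v] h] [lt_uv [uh vh]]] Xuv]] [] E;
  by exists h; case: E => <- <-.
Qed.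
End CosetGraph.

Section TwoLevels.
Variables (G : zmodType) (S : seq G) (i j : 'I_(size S)).
Hypothesis neq_ij : i != j.

Definition two_levels (v : mvert (Phi S)) : Prop := lvl v = i \/ lvl v = j.
Let H := induced two_levels.

Definition in_span2 (z : G) : Prop := exists m n : int, z = S`_i *~ m + S`_j *~ n.

Lemma in_span2D a b : in_span2 a -> in_span2 b -> in_span2 (a + b).
Proof.
case=> [m [n ->]] [m' [n' ->]]; exists (m + m'), (n + n').
by rewrite !mulrzDr addrACA.
Qed.

(* Two vertices of the same level sharing a label are linked through the
   coset of that label at the other level. *)
Lemma mconn_of_common_label (p q : mvert H) h :
  cos (proj1_sig p) h -> cos (proj1_sig q) h -> mconn p q.
Proof.
move=> ph qh; have [eq_pq|neq_pq] := eqVneq (lvl (proj1_sig p)) (lvl (proj1_sig q));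
  last exact: rt_step (madj_of_common_label neq_pq ph qh).
pose k := if lvl (proj1_sig p) == i then j else i.
pose w0 : Phi_vert S := exist _ (k, coset S`_k h) (ex_intro _ h erefl).
have w0_lvl : two_levels w0 by rewrite /two_levels /lvl /= /k; case: ifP; [right|left].
pose w : mvert H := exist _ w0 w0_lvl.
have wh : cos (proj1_sig w) h by exists 0; rewrite mulr0z add0r.
have neq_pw : lvl (proj1_sig p) != lvl (proj1_sig w).
  by change (lvl (proj1_sig p) != k); rewrite /k; case: ifP => [/eqP ->|->].
apply: (@rt_trans _ _ _ w); apply/rt_step.
- exact: madj_of_common_label neq_pw ph wh.
- by apply: madj_of_common_label wh qh; rewrite eq_sym -eq_pq.
Qed.

Lemma miso_two_level_components (u v : mvert H) : miso (component u) (component v).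
Proof.
have [x [ux _]] := cos_repr (proj1_sig u).
have [y [vy _]] := cos_repr (proj1_sig v).
pose d := @induced_iso _ _ (Phi_translation S (y - x)) two_levels two_levels
  (fun _ h => h) (fun _ h => h).
apply: (miso_component (d := d)); apply: (mconn_of_common_label vy).
by rewrite /= /cos /= opprB addrC subrK.
Qed.

Lemma mconn_cos_span (p q : mvert H) x :
  mconn p q -> cos (proj1_sig p) x ->
  exists g, cos (proj1_sig q) g /\ in_span2 (g - x).
Proof.
move=> pq; elim: pq x => [p' q' pq' | p' | p' q' r _ IHpq _ IHqr] x px.
- have [h [p'h q'h]] := common_label_of_madj pq'.
  exists h; split=> //; have [k ->] := cos_sub px p'h.
  by case: (proj2_sig p') => ->; [exists k, 0 | exists 0, k];
    rewrite mulr0z ?addr0 ?add0r.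
- by exists x; split=> //; exists 0, 0; rewrite subrr !mulr0z addr0.
- have [g [qg span_g]] := IHpq x px; have [g' [rg' span_g']] := IHqr g qg.
  by exists g'; split=> //; rewrite -(subrK g g') -addrA; apply: in_span2D.
Qed.

Lemma component_complete_bipartite (u v : mvert H) :
  mconn u v -> lvl (proj1_sig u) = i -> lvl (proj1_sig v) = j -> madj u v.
Proof.
move=> uv lu lv; have [x [ux _]] := cos_repr (proj1_sig u).
have [g [vg [m [n gx]]]] := mconn_cos_span uv ux.
apply: (madj_of_common_label (h := S`_i *~ m + x)).
- by rewrite lu lv.
- by rewrite -lu; apply: cos_shift.
- have -> : S`_i *~ m + x = S`_j *~ (- n) + g.
    by rewrite -(subrK x g) gx mulrNz -!addrA addrCA addKr.
  by rewrite -lv; apply: cos_shift.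
Qed.
End TwoLevels.

Theorem proposition5 (G : zmodType) (S : seq G) (i j : 'I_(size S)) :
  i != j ->
  let H := induced (fun v : mvert (Phi S) => lvl v = i \/ lvl v = j) in
  (forall u v : mvert H, miso (component u) (component v)) /\
  (forall u v : mvert H, mconn u v ->
     lvl (proj1_sig u) = i -> lvl (proj1_sig v) = j -> madj u v).
Proof.
move=> neq_ij H; split.
- exact: miso_two_level_components.
- exact: component_complete_bipartite.
Qed.
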